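(* Let $\mathfrak h\subseteq\Phi^+$ be a Hessenberg set and let $v,w\in W$ with $v$ a cover of $w$. Then $|N_v|-|\Phi^+\setminus\mathfrak h|\le|N^{\mathfrak h}_v|\le|N^{\mathfrak h}_w|+1$.
   Context: $\Phi$ is a crystallographic root system in a real Euclidean space with base $\Delta$, positive roots $\Phi^+$, $\Phi^-=-\Phi^+$, Weyl group $W$ with length $\ell$, and $s_\alpha$ the reflection through $\alpha$. Write $\alpha\prec\beta$ if $\beta-\alpha$ is a sum of positive roots. A Hessenberg set is a subset $\mathfrak h\subseteq\Phi^+$ whose complement in $\Phi^+$ is upward closed for $\prec$. For $w\in W$, $N_w=\{\beta\in\Phi^+: w^{-1}\beta\in\Phi^-\}$ and $N^{\mathfrak h}_w=\{\beta\in\Phi^+: w^{-1}\beta\in-\mathfrak h\}$. We say $v$ is a cover of $w$ if $v=s_\alpha w$ for some $\alpha\in\Phi^+$ with $v^{-1}\alpha\in\Phi^-$ and $\ell(v)=\ell(w)+1$. *)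

From HB Require Import structures.
From mathcomp Require Import all_boot all_order all_algebra.
From mathcomp Require Import boolp reals.
Set Implicit Arguments. Unset Strict Implicit. Unset Printing Implicit Defensive.
Import Order.TTheory GRing.Theory Num.Theory.
Local Open Scope ring_scope.

(* The Euclidean space is R^n (column vectors 'cV[R]_n) with the standard   *)
(* inner product; linear maps (in particular Weyl group elements) are       *)
(* n x n matrices acting by left multiplication.                            *)
Section RootSystems.
Variables (R : realType) (n : nat).
Local Notation V := 'cV[R]_n.

Definition dotp (a b : V) : R := \sum_(i < n) a i 0 * b i 0.

(* reflection through a : s_a(x) = x - (2 (a,x)/(a,a)) a *)
Definition refl (a : V) : 'M[R]_n := 1%:M - (2 / dotp a a) *: (a *m a^T).

Definition root_system (Phi : seq V) : Prop :=
  [/\ uniq Phi /\ 0 \notin Phi,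
      (forall v : V, exists c : V -> R, v = \sum_(a <- Phi) c a *: a),
      (forall a b, a \in Phi -> b \in Phi -> refl a *m b \in Phi),
      (forall a b, a \in Phi -> b \in Phi -> (2 * dotp a b / dotp a a) \is a Num.int)
    & (forall a (c : R), a \in Phi -> c *: a \in Phi -> c = 1 \/ c = -1)].

Definition int_comb (Delta : seq V) (c : V -> int) : V :=
  \sum_(a <- Delta) (c a)%:~R *: a.

Definition is_base (Phi Delta : seq V) : Prop :=
  [/\ uniq Delta,
      {subset Delta <= Phi},
      (forall c : V -> R, \sum_(a <- Delta) c a *: a = 0 ->
          forall a, a \in Delta -> c a = 0)
    & (forall b, b \in Phi -> exists c : V -> int, b = int_comb Delta c /\
          ((forall a, a \in Delta -> 0 <= c a) \/ (forall a, a \in Delta -> c a <= 0)))].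

Definition is_pos (Delta : seq V) (b : V) : Prop :=
  exists c : V -> int, (forall a, a \in Delta -> 0 <= c a) /\ b = int_comb Delta c.

Definition posroots (Phi Delta : seq V) : seq V :=
  [seq b <- Phi | `[< is_pos Delta b >]].

Definition negroot (Phi Delta : seq V) (b : V) : bool := - b \in posroots Phi Delta.

Definition prec (Phi Delta : seq V) (a b : V) : Prop :=
  exists s : seq V, {subset s <= posroots Phi Delta} /\ b - a = \sum_(x <- s) x.

Definition hessenberg (Phi Delta : seq V) (h : pred V) : Prop :=
  {subset h <= posroots Phi Delta} /\
  (forall a b, a \in posroots Phi Delta -> b \in posroots Phi Delta ->
     ~~ h a -> prec Phi Delta a b -> ~~ h b).

Definition prod_refl (s : seq V) : 'M[R]_n := foldr (fun a M => refl a *m M) 1%:M s.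

Definition in_weyl (Phi : seq V) (w : 'M[R]_n) : Prop :=
  exists s : seq V, {subset s <= Phi} /\ w = prod_refl s.

Definition weyl_length (Delta : seq V) (w : 'M[R]_n) (k : nat) : Prop :=
  (exists s : seq V, {subset s <= Delta} /\ size s = k /\ w = prod_refl s) /\
  (forall s : seq V, {subset s <= Delta} -> w = prod_refl s -> (k <= size s)%N).

Definition Nset (Phi Delta : seq V) (w : 'M[R]_n) : seq V :=
  [seq b <- posroots Phi Delta | negroot Phi Delta (invmx w *m b)].

Definition Nhset (Phi Delta : seq V) (h : pred V) (w : 'M[R]_n) : seq V :=
  [seq b <- posroots Phi Delta | h (- (invmx w *m b))].

Definition is_cover (Phi Delta : seq V) (v w : 'M[R]_n) : Prop :=
  exists a, [/\ a \in posroots Phi Delta, v = refl a *m w,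
     negroot Phi Delta (invmx v *m a) &
     exists k, weyl_length Delta w k /\ weyl_length Delta v k.+1].

End RootSystems.

(* Elements of the Weyl group are orthogonal, so N_x and N^h_x can be computed
   with x^T in place of x^-1.

   Lower bound: a root b of N_v either lies in N^h_v, or b |-> -v^-1 b sends it
   injectively into Phi+ \ h.

   Upper bound: write v = s_al w with w^-1 al > 0.  The positive roots b with
   s_al b < 0 form a set D stable under b |-> -s_al b = k al - b (k > 0), and s_al
   permutes the other positive roots.  As l(x) = |N_x| (deletion condition),
   |N_v| = |N_w| + 1 forces al to be the only b in D for which both w^-1 b and
   w^-1 (k al - b) are positive.  So for any other b in D with -v^-1 b in h, the
   root -w^-1 b is positive and lies below -v^-1 b = w^-1 (k al - b), hence is
   in h by upward closure of the complement: passing from w to v adds at most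
   al to N^h. *)

From HB Require Import structures.
From mathcomp Require Import all_boot all_order all_algebra.
From mathcomp Require Import boolp reals.
From mathcomp Require Import ring lra zify.
Import Order.TTheory GRing.Theory Num.Theory.
Local Open Scope ring_scope.
Set Implicit Arguments. Unset Strict Implicit. Unset Printing Implicit Defensive.

Section Reflections.
Variables (R : realType) (n : nat).
Local Notation V := 'cV[R]_n.

Lemma dotpE (a b : V) : dotp a b = (a^T *m b) 0 0.
Proof. by rewrite !mxE; apply: eq_bigr => k _; rewrite mxE. Qed.

Lemma trmx_mul_dotp (a b : V) : a^T *m b = (dotp a b)%:M.
Proof. by apply/matrixP => i j; rewrite !ord1 [RHS]mxE eqxx mulr1n dotpE. Qed.

Lemma reflE (a b : V) : refl a *m b = b - (2 * dotp a b / dotp a a) *: a.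
Proof.
rewrite /refl mulmxBl mul1mx -scalemxAl -mulmxA trmx_mul_dotp mul_mx_scalar.
by rewrite scalerA mulrAC.
Qed.

Lemma trmx_refl (a : V) : (refl a)^T = refl a.
Proof. by rewrite /refl linearB /= linearZ /= trmx1 trmx_mul trmxK. Qed.

Lemma dotp_eq0 (a : V) : (dotp a a == 0) = (a == 0).
Proof.
apply/eqP/eqP => [a0|->]; last by rewrite /dotp big1 // => i _; rewrite mxE mul0r.
apply/matrixP => i j; rewrite ord1 mxE.
have sq_ge0 k : predT k -> 0 <= a k 0 * a k 0 by rewrite -expr2 sqr_ge0.
by have /eqP := psumr_eq0P sq_ge0 a0 (i := i) isT; rewrite mulf_eq0 orbb => /eqP.
Qed.

Lemma refl_orthogonal (X : 'M[R]_n) (c : V) : X^T *m X = 1%:M ->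
  refl (X *m c) = X *m refl c *m X^T.
Proof.
move=> XtX; have XXt := mulmx1C XtX.
have dotpX : dotp (X *m c) (X *m c) = dotp c c.
  by rewrite !dotpE trmx_mul -mulmxA (mulmxA X^T) XtX mul1mx.
rewrite /refl dotpX mulmxBr mulmx1 mulmxBl XXt; congr (_ - _).
by rewrite -scalemxAr -scalemxAl trmx_mul !mulmxA.
Qed.

Section NonzeroVector.
Variable a : V.
Hypothesis a_neq0 : a != 0.

Let dotp_neq0 : dotp a a != 0. Proof. by rewrite dotp_eq0. Qed.

Lemma refl_mulmx_refl : refl a *m refl a = 1%:M.
Proof.
set c := 2 / dotp a a; set U := a *m a^T.
have UU : U *m U = dotp a a *: U.
  by rewrite /U mulmxA -(mulmxA a) trmx_mul_dotp mul_mx_scalar -scalemxAl.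
rewrite /refl -/c -/U mulmxBl mul1mx mulmxBr mulmx1 -scalemxAl -scalemxAr UU.
have -> : c *: (c *: (dotp a a *: U)) = (c + c) *: U.
  by rewrite !scalerA /c; congr (_ *: _); field.
by rewrite scalerDl opprB addrK subrK.
Qed.

Lemma reflK : cancel (fun b : V => refl a *m b) (fun b => refl a *m b).
Proof. by move=> b; rewrite mulmxA refl_mulmx_refl mul1mx. Qed.

Lemma refl_root : refl a *m a = - a.
Proof. by rewrite reflE mulfK // scaler_nat mulr2n opprD addNKr. Qed.

Lemma refl_conj (c : V) : refl (refl a *m c) = refl a *m refl c *m refl a.
Proof. by rewrite refl_orthogonal ?trmx_refl ?refl_mulmx_refl. Qed.

End NonzeroVector.
End Reflections.

Section SeqCounting.
Variable T : eqType.
Implicit Types (p q : pred T) (s : seq T).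

Lemma count_invol (f : T -> T) p s : cancel f f -> uniq s ->
  {in s, forall x, f x \in s} -> count (fun x => p (f x)) s = count p s.
Proof.
move=> fK s_uniq s_f; rewrite -(count_map f p); apply/permP/uniq_perm => //.
  by rewrite map_inj_uniq //; exact: can_inj fK.
move=> y; apply/mapP/idP => [[x xs ->]|ys]; first exact: s_f.
by exists (f y); [exact: s_f | rewrite fK].
Qed.

Lemma count_filter_predC p q s :
  count p s = (count p [seq x <- s | q x] + count p [seq x <- s | ~~ q x])%N.
Proof.
rewrite !count_filter; elim: s => //= x s ->.
by case: (p x) (q x) => [] []; rewrite /= ?addnS.
Qed.

Lemma sub_in_count p q s : {in s, subpred p q} -> (count p s <= count q s)%N.
Proof.
move=> pq; rewrite (@eq_in_count _ p (predI p q)) ?sub_count // => [x /andP[]//|].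
by move=> x xs /=; case pxs: (p x); rewrite // pq.
Qed.

Lemma subset_consP x s (A : seq T) :
  {subset x :: s <= A} -> x \in A /\ {subset s <= A}.
Proof. by move=> xsA; split=> [|y ys]; apply: xsA; rewrite inE ?eqxx ?ys ?orbT. Qed.

Lemma count_mem_rem p s x : x \in s -> count p s = (p x + count p (rem x s))%N.
Proof. by move=> xs; rewrite (permP (perm_to_rem xs)). Qed.

End SeqCounting.

Lemma big_seq_only (M : nmodType) (I : eqType) (s : seq I) (F : I -> M) i :
  uniq s -> i \in s -> {in s, forall j, j != i -> F j = 0} ->
  \sum_(j <- s) F j = F i.
Proof.
move=> s_uniq si F0; rewrite (big_rem i) //= big_seq big1 ?addr0 // => j.
by rewrite mem_rem_uniq // inE => /andP[ji js]; apply: F0.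
Qed.

Section RootSystem.
Variables (R : realType) (n : nat) (Phi Delta : seq 'cV[R]_n).
Hypotheses (Phi_root_system : root_system Phi) (Delta_base : is_base Phi Delta).
Local Notation V := 'cV[R]_n.
Local Notation Pos := (posroots Phi Delta).
Local Notation neg := (negroot Phi Delta).
Local Notation comb := (int_comb Delta).

Lemma uniq_posroots : uniq Pos.
Proof. by case: Phi_root_system => [[Phi_uniq _] _ _ _ _]; exact: filter_uniq. Qed.

Lemma root_neq0 a : a \in Phi -> a != 0.
Proof.
by case: Phi_root_system => [[_ Phi0] _ _ _ _] aPhi; apply: contraNneq Phi0 => <-.
Qed.

Lemma refl_root_mem a b : a \in Phi -> b \in Phi -> refl a *m b \in Phi.
Proof. by case: Phi_root_system => _ _ Phi_refl _ _; exact: Phi_refl. Qed.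

Lemma oppr_root_mem a : a \in Phi -> - a \in Phi.
Proof.
by move=> aPhi; rewrite -(refl_root (root_neq0 aPhi)) refl_root_mem.
Qed.

Lemma mem_posroots b : (b \in Pos) = (b \in Phi) && `[< is_pos Delta b >].
Proof. by rewrite mem_filter andbC. Qed.

Lemma posroot_root b : b \in Pos -> b \in Phi.
Proof. by rewrite mem_posroots => /andP[]. Qed.

Lemma posroot_is_pos b : b \in Pos -> is_pos Delta b.
Proof. by rewrite mem_posroots => /andP[_ /asboolP]. Qed.

Lemma uniq_base : uniq Delta.
Proof. by case: Delta_base. Qed.

Lemma base_root a : a \in Delta -> a \in Phi.
Proof. by case: Delta_base => _ DeltaPhi _ _; exact: DeltaPhi. Qed.

Lemma int_combD c d : comb c + comb d = comb (fun x => c x + d x).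
Proof.
by rewrite /int_comb -big_split; apply: eq_bigr => x _; rewrite intrD scalerDl.
Qed.

Lemma int_combN c : - comb c = comb (fun x => - c x).
Proof.
by rewrite /int_comb -sumrN; apply: eq_bigr => x _; rewrite intrN scaleNr.
Qed.

Lemma int_combMn (k : nat) c : k%:R *: comb c = comb (fun x => k%:Z * c x).
Proof.
by rewrite /int_comb scaler_sumr; apply: eq_bigr => x _; rewrite scalerA intrM.
Qed.

Lemma int_comb_eq0 c : comb c = 0 -> {in Delta, forall a, c a = 0}.
Proof.
case: Delta_base => _ _ Delta_free _ c0 a aDelta.
by apply/eqP; rewrite -(intr_eq0 R) (Delta_free (fun x => (c x)%:~R)).
Qed.

Lemma is_posD x y : is_pos Delta x -> is_pos Delta y -> is_pos Delta (x + y).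
Proof.
move=> [c [c_ge0 ->]] [d [d_ge0 ->]]; exists (fun x => c x + d x).
by rewrite int_combD; split=> // a aDelta; rewrite addr_ge0 ?c_ge0 ?d_ge0.
Qed.

Lemma is_posMn (k : nat) x : is_pos Delta x -> is_pos Delta (k%:R *: x).
Proof.
move=> [c [c_ge0 ->]]; exists (fun x => k%:Z * c x).
by rewrite int_combMn; split=> // a aDelta; rewrite mulr_ge0 ?c_ge0.
Qed.

Lemma is_pos_oppr_eq0 x : is_pos Delta x -> is_pos Delta (- x) -> x = 0.
Proof.
move=> [c [c_ge0 xE]] [d [d_ge0 NxE]].
have cd0 : comb (fun x => c x + d x) = 0 by rewrite -int_combD -xE -NxE subrr.
rewrite xE /int_comb big_seq big1 // => a aDelta.
have := int_comb_eq0 cd0 aDelta; have := c_ge0 a aDelta; have := d_ge0 a aDelta.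
by move=> d0 c0 cd; rewrite (_ : c a = 0) ?scale0r //; lia.
Qed.

Lemma base_posroot a : a \in Delta -> a \in Pos.
Proof.
move=> aDelta; rewrite mem_posroots base_root //=; apply/asboolP.
exists (fun x => (x == a)%:Z); split=> [x _|]; first by case: (x == a).
rewrite /int_comb (big_seq_only uniq_base aDelta) ?eqxx ?scale1r //.
by move=> z _ /negbTE ->; rewrite scale0r.
Qed.

Lemma root_pos_or_neg b : b \in Phi -> (b \in Pos) || neg b.
Proof.
case: Delta_base => _ _ _ Delta_sign bPhi.
have [c [bE [c_ge0|c_le0]]] := Delta_sign b bPhi.
  by rewrite mem_posroots bPhi; apply/orP; left; apply/asboolP; exists c.
apply/orP; right; rewrite /negroot mem_posroots oppr_root_mem //=; apply/asboolP.
exists (fun x => - c x); rewrite bE int_combN; split=> // a aDelta.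
by rewrite oppr_ge0 c_le0.
Qed.

Lemma posroot_not_neg b : b \in Pos -> ~~ neg b.
Proof.
move=> bPos; apply/negP => /posroot_is_pos /(is_pos_oppr_eq0 (posroot_is_pos bPos)).
by move/eqP; apply/negP; exact/root_neq0/posroot_root.
Qed.

Lemma root_not_pos_neg b : b \in Phi -> b \notin Pos -> neg b.
Proof. by move=> /root_pos_or_neg /orP[->|]. Qed.

Lemma negroot_notin_pos b : b \in Phi -> neg b = (b \notin Pos).
Proof.
move=> bPhi; apply/idP/idP => [nb|]; last exact: root_not_pos_neg.
by apply: contraL nb => /posroot_not_neg.
Qed.

Lemma is_posD_simple x y (m : R) a : a \in Delta ->
  is_pos Delta x -> is_pos Delta y -> x + y = m *: a ->
  exists2 k : int, 0 <= k & x = k%:~R *: a.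
Proof.
move=> aDelta [c [c_ge0 xE]] [d [d_ge0 yE]] xyE.
case: Delta_base => _ _ Delta_free _.
have cd_sum : \sum_(z <- Delta) ((c z + d z)%:~R - (z == a)%:R * m) *: z = 0.
  under eq_bigr do rewrite scalerBl.
  rewrite sumrB (big_seq_only (F := fun z => (z == a)%:R * m *: z) uniq_base aDelta).
    by rewrite -[X in X - _]/(comb _) -int_combD -xE -yE xyE eqxx mul1r subrr.
  by move=> z _ /negbTE ->; rewrite mul0r scale0r.
have c_off_a z : z \in Delta -> z != a -> c z = 0.
  move=> zDelta za; have := Delta_free _ cd_sum z zDelta.
  rewrite (negbTE za) mul0r subr0 => /eqP; rewrite intr_eq0 => /eqP.
  by have := c_ge0 z zDelta; have := d_ge0 z zDelta; lia.
exists (c a); first exact: c_ge0.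
rewrite xE /int_comb (big_seq_only uniq_base aDelta) // => z zDelta za.
by rewrite c_off_a // scale0r.
Qed.

Lemma refl_simple_posroot a b : a \in Delta -> b \in Pos -> b != a ->
  refl a *m b \in Pos.
Proof.
move=> aDelta bPos ba; have aPhi := base_root aDelta; have bPhi := posroot_root bPos.
apply: contraT => /(root_not_pos_neg (refl_root_mem aPhi bPhi)) /posroot_is_pos nb.
have [k k_ge0 bE] : exists2 k : int, 0 <= k & b = k%:~R *: a.
  apply: (is_posD_simple aDelta (posroot_is_pos bPos) nb).
  by rewrite reflE opprB addrC subrK.
case: Phi_root_system => _ _ _ _ Phi_reduced.
have kaPhi : k%:~R *: a \in Phi by rewrite -bE.
have [k1|kN1] := Phi_reduced a _ aPhi kaPhi.
  by move: ba; rewrite bE k1 scale1r eqxx.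
by move: k_ge0; rewrite -(ler0z R) kN1; lra.
Qed.

Lemma refl_neg_posroot a b : a \in Pos -> b \in Pos -> neg (refl a *m b) ->
  exists2 k : nat, (0 < k)%N & refl a *m b = b - k%:R *: a.
Proof.
move=> aPos bPos nb; have aPhi := posroot_root aPos; have bPhi := posroot_root bPos.
case: Phi_root_system => _ _ _ Phi_cartan _.
have /intrP[z zE] := Phi_cartan a b aPhi bPhi.
have sE : refl a *m b = b - z%:~R *: a by rewrite reflE zE.
case: z {zE} sE => [[|k]|k] sE; first 2 last.
- have : is_pos Delta (refl a *m b).
    rewrite sE NegzE intrN scaleNr opprK.
    by apply: is_posD; [exact: posroot_is_pos | exact/is_posMn/posroot_is_pos].
  move/is_pos_oppr_eq0 => /(_ (posroot_is_pos nb)) /eqP.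
  by rewrite (negbTE (root_neq0 (refl_root_mem aPhi bPhi))).
- by rewrite sE scale0r subr0 (negbTE (posroot_not_neg bPos)) in nb.
- by exists k.+1.
Qed.

Lemma prod_refl_cons (a : V) s : prod_refl (a :: s) = refl a *m prod_refl s.
Proof. by []. Qed.

Lemma trmx_prod_reflK s : {subset s <= Phi} -> (prod_refl s)^T *m prod_refl s = 1%:M.
Proof.
elim: s => [_|a s IHs /subset_consP[aPhi sPhi]]; first by rewrite /= trmx1 mulmx1.
rewrite prod_refl_cons trmx_mul trmx_refl -mulmxA (mulmxA (refl a)).
by rewrite refl_mulmx_refl ?root_neq0 // mul1mx IHs.
Qed.

Lemma invmx_prod_refl s : {subset s <= Phi} -> invmx (prod_refl s) = (prod_refl s)^T.
Proof.
move=> /trmx_prod_reflK sK; have [_ s_unit] := mulmx1_unit sK.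
by rewrite -[invmx _]mul1mx -sK -mulmxA mulmxV ?mulmx1.
Qed.

Lemma trmx_prod_refl_root s b : {subset s <= Phi} -> b \in Phi ->
  (prod_refl s)^T *m b \in Phi.
Proof.
elim: s b => [|a s IHs] b; first by rewrite /= trmx1 mul1mx.
case/subset_consP=> aPhi sPhi bPhi.
by rewrite prod_refl_cons trmx_mul trmx_refl -mulmxA IHs ?refl_root_mem.
Qed.

(* [Ncard x] is |N_x| whenever x^T = x^-1, as for the elements of the Weyl group. *)
Definition Ncard (x : 'M[R]_n) : nat := count (fun b => neg (x^T *m b)) Pos.

Lemma Ncard1 : Ncard 1%:M = 0%N.
Proof.
rewrite /Ncard (@eq_in_count _ _ pred0) ?count_pred0 // => b bPos /=.
by rewrite trmx1 mul1mx; apply/negbTE/posroot_not_neg.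
Qed.

Lemma refl_simple_rem_posroot a b : a \in Delta -> b \in rem a Pos ->
  refl a *m b \in rem a Pos.
Proof.
move=> aDelta; have aPhi := base_root aDelta.
rewrite !mem_rem_uniq ?uniq_posroots // !inE => /andP[ba bPos].
rewrite refl_simple_posroot // andbT; apply: contraNneq (posroot_not_neg bPos) => sba.
by rewrite /negroot -[b](reflK (root_neq0 aPhi)) sba refl_root ?root_neq0 ?opprK ?base_posroot.
Qed.

Lemma Ncard_refl_simple a (y : 'M[R]_n) : a \in Delta -> y^T *m a \in Phi ->
  (Ncard (refl a *m y) + (neg (y^T *m a)).*2 = (Ncard y).+1)%N.
Proof.
move=> aDelta yaPhi; have aPos := base_posroot aDelta.
have aK := reflK (root_neq0 (base_root aDelta)).
rewrite /Ncard (@eq_count _ _ (fun b => neg (y^T *m (refl a *m b)))); last first.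
  by move=> b /=; rewrite trmx_mul trmx_refl mulmxA.
rewrite !(count_mem_rem _ aPos) (count_invol (fun b => neg (y^T *m b)) aK); first last.
- by move=> b; exact: refl_simple_rem_posroot.
- exact/rem_uniq/uniq_posroots.
rewrite refl_root ?(root_neq0 (base_root aDelta)) // mulmxN /negroot opprK /=.
rewrite -/(neg _) (negroot_notin_pos yaPhi).
by case: (_ \in Pos) => /=; lia.
Qed.

Lemma sub_base_root (s : seq V) : {subset s <= Delta} -> {subset s <= Phi}.
Proof. by move=> sDelta x /sDelta; exact: base_root. Qed.

Lemma Ncard_prod_refl_le s : {subset s <= Delta} -> (Ncard (prod_refl s) <= size s)%N.
Proof.
elim: s => [_|a s IHs /subset_consP[aDelta sDelta]]; first by rewrite Ncard1.
have := Ncard_refl_simple aDelta (trmx_prod_refl_root (sub_base_root sDelta) (base_root aDelta)).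
by have := IHs sDelta; rewrite prod_refl_cons /=; case: (neg _) => /=; lia.
Qed.

Lemma prod_refl_exchange s c : {subset s <= Delta} -> c \in Pos ->
  neg ((prod_refl s)^T *m c) ->
  exists2 t, {subset t <= Delta} & (size t < size s)%N /\ refl c *m prod_refl s = prod_refl t.
Proof.
elim: s c => [|b s IHs] c.
  by move=> _ cPos; rewrite /= trmx1 mul1mx (negbTE (posroot_not_neg cPos)).
case/subset_consP=> bDelta sDelta cPos nc.
have b_neq0 := root_neq0 (base_root bDelta).
have [->|cb] := eqVneq c b.
  by exists s => //; rewrite prod_refl_cons mulmxA refl_mulmx_refl ?mul1mx.
move: nc; rewrite prod_refl_cons trmx_mul trmx_refl -mulmxA => nc.
have [t tDelta [t_lt tE]] := IHs _ sDelta (refl_simple_posroot bDelta cPos cb) nc.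
exists (b :: t) => [x|]; first by rewrite inE => /predU1P[->|/tDelta].
by rewrite prod_refl_cons -tE refl_conj // !mulmxA refl_mulmx_refl ?mul1mx.
Qed.

Lemma prod_refl_shorten s : {subset s <= Delta} -> (Ncard (prod_refl s) < size s)%N ->
  exists2 t, {subset t <= Delta} & (size t < size s)%N /\ prod_refl s = prod_refl t.
Proof.
elim: s => [//|a s IHs /subset_consP[aDelta sDelta] lt_N_s].
have [lt_N_s'|ge_N_s'] := ltnP (Ncard (prod_refl s)) (size s).
  have [t tDelta [t_lt tE]] := IHs sDelta lt_N_s'.
  exists (a :: t) => [x|]; first by rewrite inE => /predU1P[->|/tDelta].
  by rewrite !prod_refl_cons tE.
have N_s : Ncard (prod_refl s) = size s.
  by apply/eqP; rewrite eqn_leq ge_N_s' Ncard_prod_refl_le.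
have na : neg ((prod_refl s)^T *m a).
  move: lt_N_s; have := Ncard_refl_simple aDelta
    (trmx_prod_refl_root (sub_base_root sDelta) (base_root aDelta)).
  by rewrite -prod_refl_cons N_s /=; case: (neg _) => //=; lia.
have [t tDelta [t_lt tE]] := prod_refl_exchange sDelta (base_posroot aDelta) na.
by exists t => //; split; [exact: ltnW | rewrite prod_refl_cons].
Qed.

Lemma Ncard_weyl_length (x : 'M[R]_n) k : weyl_length Delta x k -> Ncard x = k.
Proof.
case=> [[s [sDelta [<- ->]]] s_min]; apply/eqP; rewrite eqn_leq Ncard_prod_refl_le //=.
rewrite leqNgt; apply/negP => /(prod_refl_shorten sDelta) [t tDelta [t_lt tE]].
by have := s_min t tDelta tE; rewrite leqNgt t_lt.
Qed.

Section Cover.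
Variables (h : pred V) (al : V) (w : 'M[R]_n).
Hypotheses (h_hess : hessenberg Phi Delta h) (alPos : al \in Pos).
Hypotheses (w_root : {in Phi, forall b, w^T *m b \in Phi}) (w_al : w^T *m al \in Pos).
Hypothesis Ncard_cover : Ncard (refl al *m w) = (Ncard w).+1.

Local Notation sal b := (refl al *m b).
Local Notation flip b := (- sal b).
Local Notation flipped := [seq b <- Pos | neg (sal b)].
Local Notation kept := [seq b <- Pos | ~~ neg (sal b)].
Local Notation wpos b := (w^T *m b \in Pos).
Local Notation wneg b := (neg (w^T *m b)).

Let alPhi : al \in Phi. Proof. exact: posroot_root. Qed.
Let salK : cancel (fun b : V => sal b) (fun b => sal b). Proof. exact/reflK/root_neq0. Qed.
Let flipK : cancel (fun b : V => flip b) (fun b => flip b).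
Proof. by move=> b; rewrite mulmxN opprK salK. Qed.

Let mem_flipped b : (b \in flipped) = neg (sal b) && (b \in Pos).
Proof. exact: mem_filter. Qed.
Let mem_kept b : (b \in kept) = ~~ neg (sal b) && (b \in Pos).
Proof. exact: mem_filter. Qed.

Let uniq_flipped : uniq flipped. Proof. exact: filter_uniq uniq_posroots. Qed.

Let al_flipped : al \in flipped.
Proof. by rewrite mem_flipped refl_root ?(root_neq0 alPhi) // /negroot (opprK al) alPos. Qed.

Lemma flip_flipped b : b \in flipped -> flip b \in flipped.
Proof.
by rewrite !mem_flipped => /andP[nb bPos]; rewrite mulmxN salK /negroot opprK bPos.
Qed.

Lemma refl_kept b : b \in kept -> sal b \in kept.
Proof.
rewrite !mem_kept => /andP[nb bPos]; rewrite salK posroot_not_neg //=.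
by apply: contraNT nb; exact/root_not_pos_neg/refl_root_mem/posroot_root.
Qed.

Lemma flip_flippedE b : b \in flipped ->
  exists2 k : nat, (0 < k)%N & flip b = k%:R *: al - b.
Proof.
rewrite mem_flipped => /andP[nb bPos].
by have [k k_gt0 ->] := refl_neg_posroot alPos bPos nb; exists k; rewrite // opprB.
Qed.

Lemma Ncard_refl_split :
  Ncard (sal w) = (count (fun b => wpos b) flipped + count (fun b => wneg b) kept)%N.
Proof.
rewrite /Ncard (count_filter_predC _ (fun b => neg (sal b))); congr (_ + _)%N.
  rewrite -[in RHS](count_invol _ flipK uniq_flipped flip_flipped).
  by apply: eq_count => b /=; rewrite trmx_mul trmx_refl -mulmxA /negroot mulmxN.
rewrite -[in RHS](count_invol _ salK (filter_uniq _ uniq_posroots) refl_kept).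
by apply: eq_count => b /=; rewrite trmx_mul trmx_refl -mulmxA.
Qed.

Lemma count_flipped_wpos_wneg :
  (count (fun b => wpos b) flipped + count (fun b => wneg b) flipped = size flipped)%N.
Proof.
rewrite -(count_predC (fun b => wpos b)); congr (_ + _)%N; apply: eq_in_count => b.
by rewrite mem_flipped => /andP[_ /posroot_root/w_root/negroot_notin_pos].
Qed.

Lemma wpos_or_flip b : b \in flipped -> wpos b || wpos (flip b).
Proof.
move=> bD; have [k k_gt0 flipE] := flip_flippedE bD.
have bPhi : b \in Phi by move: bD; rewrite mem_flipped => /andP[_ /posroot_root].
have fbPhi : flip b \in Phi by exact/oppr_root_mem/refl_root_mem.
apply: contraT; rewrite negb_or => /andP[nb nfb].
have /posroot_is_pos := root_not_pos_neg (w_root bPhi) nb.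
have /posroot_is_pos := root_not_pos_neg (w_root fbPhi) nfb.
(* -w^T b and -w^T (flip b) are positive, but their sum is -k w^T al. *)
move=> /is_posD /[apply]; rewrite flipE mulmxBr -scalemxAr opprB addrC addKr.
move=> /(is_pos_oppr_eq0 (is_posMn k (posroot_is_pos w_al))) /eqP.
by rewrite scaler_eq0 pnatr_eq0 gtn_eqF // (negbTE (root_neq0 (posroot_root w_al))).
Qed.

Lemma count_flipped_wpos_flip :
  count (fun b => wpos b && wpos (flip b)) flipped = 1%N.
Proof.
have cU : count (predU (fun b => wpos b) (fun b => wpos (flip b))) flipped = size flipped.
  by rewrite -count_predT; apply: eq_in_count => b /wpos_or_flip.
have cI : (size flipped + count (fun b => wpos b && wpos (flip b)) flipped
           = count (fun b => wpos b) flipped + count (fun b => wpos b) flipped)%N.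
  rewrite -cU -[X in (_ = _ + X)%N](count_invol _ flipK uniq_flipped flip_flipped).
  exact: count_predUI.
have Nw : Ncard w = (count (fun b => wneg b) flipped + count (fun b => wneg b) kept)%N.
  exact: count_filter_predC.
by have := count_flipped_wpos_wneg; move: Ncard_cover; rewrite Ncard_refl_split Nw; lia.
Qed.

Lemma flipped_wpos_flip b : b \in flipped -> wpos b -> wpos (flip b) -> b = al.
Proof.
have al_both : wpos al && wpos (flip al).
  by rewrite refl_root ?(root_neq0 alPhi) // opprK w_al.
move=> bD wb wfb; move: count_flipped_wpos_flip; apply: contra_eq => ba.
rewrite (count_mem_rem _ al_flipped) al_both -[X in _ != X]addn0 eqn_add2l -lt0n -has_count.
by apply/hasP; exists b; rewrite ?wb ?wfb // mem_rem_uniq // inE ba bD.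
Qed.

Lemma hessenberg_flipped b : b \in flipped -> b != al ->
  h (- (w^T *m sal b)) -> h (- (w^T *m b)).
Proof.
case: h_hess => h_pos h_up bD ba; rewrite -mulmxN => hfb.
have [k _ flipE] := flip_flippedE bD.
have bPhi : b \in Phi by move: bD; rewrite mem_flipped => /andP[_ /posroot_root].
have wfb : wpos (flip b) by exact: h_pos.
have nwb : - (w^T *m b) \in Pos.
  apply: root_not_pos_neg (w_root bPhi) _; apply: contra_neqN ba => wb.
  exact: flipped_wpos_flip.
apply: contraLR hfb => nhb; apply: h_up nwb wfb nhb _.
exists (nseq k (w^T *m al)); split=> [x /nseqP[-> _] //|].
by rewrite big_nseq iter_addr_0 flipE mulmxBr -scalemxAr opprK subrK scaler_nat.
Qed.

Lemma count_hessenberg_refl_le :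
  (count (fun b => h (- (w^T *m sal b))) Pos <= count (fun b => h (- (w^T *m b))) Pos + 1)%N.
Proof.
set f := fun b => h (- (w^T *m b)).
rewrite !(count_filter_predC _ (fun b => neg (sal b)) Pos).
rewrite (count_invol f salK (filter_uniq _ uniq_posroots) refl_kept) addnAC leq_add2r.
apply: (@leq_trans (count (predU f (pred1 al)) flipped)).
  apply: sub_in_count => b bD /= fsb; case: (eqVneq b al) => [->|ba]; first exact: orbT.
  by rewrite orbF; exact: hessenberg_flipped.
have := count_predUI f (pred1 al) flipped.
by rewrite (count_uniq_mem _ uniq_flipped) al_flipped => <-; exact: leq_addr.
Qed.
End Cover.

Lemma Ncard_le_Nh_add_compl (h : pred V) (x : 'M[R]_n) : x *m x^T = 1%:M ->
  (Ncard x <= count (fun b => h (- (x^T *m b))) Pos + count (predC h) Pos)%N.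
Proof.
move=> xK; set f := fun b => h (- (x^T *m b)).
rewrite /Ncard (count_filter_predC _ f Pos); apply: leq_add.
  by rewrite -[count f Pos]size_filter count_size.
have mulK : injective (fun b : V => - (x^T *m b)).
  by move=> b1 b2 /oppr_inj /(congr1 (mulmx x)); rewrite !mulmxA xK !mul1mx.
rewrite -!size_filter -[X in (X <= _)%N](size_map (fun b : V => - (x^T *m b))).
apply: uniq_leq_size.
  by rewrite map_inj_uniq //; apply/filter_uniq/filter_uniq/uniq_posroots.
move=> y /mapP[b]; rewrite mem_filter => /andP[nb]; rewrite mem_filter => /andP[nfb _] ->.
by rewrite mem_filter; apply/andP.
Qed.

End RootSystem.

Unset Implicit Arguments.

Theorem corollary2p11 (R : realType) (n : nat) (Phi Delta : seq 'cV[R]_n)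
  (h : pred 'cV[R]_n) (v w : 'M[R]_n) :
  root_system Phi -> is_base Phi Delta -> hessenberg Phi Delta h ->
  in_weyl Phi v -> in_weyl Phi w -> is_cover Phi Delta v w ->
  (size (Nset Phi Delta v))%:Z
    - (size [seq b <- posroots Phi Delta | ~~ h b])%:Z
    <= (size (Nhset Phi Delta h v))%:Z
  /\ (size (Nhset Phi Delta h v) <= size (Nhset Phi Delta h w) + 1)%N.
Proof.
move=> RS BS hH _ _ [a [aPos vE nva [k [lw lv]]]].
have [[sw [/(sub_base_root BS) swPhi [_ wE]]] _] := lw.
have [[sv [/(sub_base_root BS) svPhi [_ vE']]] _] := lv.
have invv : invmx v = v^T by rewrite vE' (invmx_prod_refl RS svPhi).
have invw : invmx w = w^T by rewrite wE (invmx_prod_refl RS swPhi).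
have vtE : v^T = w^T *m refl a by rewrite vE trmx_mul trmx_refl.
split.
  rewrite lerBlDr -PoszD lez_nat /Nset /Nhset !size_filter invv.
  apply: (Ncard_le_Nh_add_compl Delta RS h); apply: mulmx1C.
  by rewrite vE' (trmx_prod_reflK RS svPhi).
have w_root b : b \in Phi -> w^T *m b \in Phi.
  by rewrite wE; exact: (trmx_prod_refl_root RS swPhi).
have w_al : w^T *m a \in posroots Phi Delta.
  move: nva; rewrite invv vtE -mulmxA refl_root ?(root_neq0 RS (posroot_root aPos)) //.
  by rewrite mulmxN /negroot opprK.
have cover : Ncard Phi Delta (refl a *m w) = (Ncard Phi Delta w).+1.
  by rewrite -vE (Ncard_weyl_length RS BS lv) (Ncard_weyl_length RS BS lw).
rewrite /Nhset !size_filter invv invw vtE.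
under eq_count do rewrite -mulmxA.
exact: (count_hessenberg_refl_le RS BS hH aPos w_root w_al cover).
Qed.
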